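(* Consider the two-unicast wireline network (''butterfly network with co-located sinks'') with nodes $\mathsf{S}_1,\mathsf{S}_2,\mathsf{M}_1,\mathsf{M}_2,\mathsf{D}$, where the single destination node $\mathsf{D}$ must decode both $W_1$ (from $\mathsf{S}_1$) and $W_2$ (from $\mathsf{S}_2$), and directed edges: edge 1 from $\mathsf{S}_1$ to $\mathsf{M}_1$, edge 2 from $\mathsf{S}_2$ to $\mathsf{M}_1$, edge 3 from $\mathsf{M}_1$ to $\mathsf{M}_2$, edge 4 from $\mathsf{S}_1$ to $\mathsf{D}$, edge 5 from $\mathsf{S}_2$ to $\mathsf{D}$, and one edge from $\mathsf{M}_2$ to $\mathsf{D}$ of capacity $\mathsf{C}_6+\mathsf{C}_7$, where edge $i$ has capacity $\mathsf{C}_i\ge0$ and $\mathsf{C}_6,\mathsf{C}_7\ge0$. Then every nonnegative rate pair $(R_1,R_2)$ satisfying $$R_1\le \mathsf{C}_1+\min\{R_1,\mathsf{C}_4\},\quad R_2\le \mathsf{C}_2+\min\{R_2,\mathsf{C}_5\},$$ $$R_1+R_2\le \min\{\mathsf{C}_3,\mathsf{C}_6+\mathsf{C}_7\}+\min\{R_2,\mathsf{C}_5\}+\min\{R_1,\mathsf{C}_4\}$$ is achievable (without security constraints).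
   Context: Network model: a directed acyclic graph; each edge $e$ is a noiseless orthogonal channel of capacity $\mathsf{C}_e$ carrying symbols over $\mathbb{F}_q$; over $n$ channel uses edge $e$ carries $X_e^n$, received as $Y_e^n=X_e^n$. Source $\mathsf{S}_i$ has message $W_i$ (uniform, $q$-ary entropy $nR_i$, $W_1,W_2$ independent). A rate pair is achievable if for some block length $n$ there are encoding functions—an edge leaving $\mathsf{S}_i$ carries a function of $W_i$, any other edge a function of the symbols received on the incoming edges of its tail—and decoding functions at $\mathsf{D}$ (functions of the symbols on its incoming edges) recovering both $W_1$ and $W_2$ with vanishing error probability. *)

From HB Require Import structures.
From mathcomp Require Import all_boot all_order all_algebra.
From mathcomp Require Import reals.
Set Implicit Arguments. Unset Strict Implicit. Unset Printing Implicit Defensive.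
Import Order.TTheory GRing.Theory Num.Theory.
Local Open Scope ring_scope.

(* Butterfly network with co-located sinks:
     edge 1 : S1 -> M1 (capacity C1)     edge 4 : S1 -> D (capacity C4)
     edge 2 : S2 -> M1 (capacity C2)     edge 5 : S2 -> D (capacity C5)
     edge 3 : M1 -> M2 (capacity C3)     edge 6 : M2 -> D (capacity C67)
   A block code of length n over the q-ary alphabet:
   - message W_i is uniform on 'I_(q ^ m_i) (q-ary entropy m_i);
   - edge e carries k_e q-ary symbols (an element of 'I_(q ^ k_e), i.e. of
     F_q^(k_e) up to a bijection) with k_e <= n * C_e (capacity constraint
     over n channel uses);
   - edges leaving S_i are functions of W_i, edge 3 is a function of what M1
     receives (edges 1,2), edge 6 is a function of what M2 receives (edge 3);
   - the decoder at D is a function of edges 4,5,6 and outputs (W1, W2).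
   The error probability (W1, W2 independent uniform) is the fraction of
   message pairs decoded incorrectly.
   (R1,R2) is achievable if for every eps > 0 there is a block length n and
   such a code with rates m_i / n >= R_i - eps and error probability <= eps. *)
Definition butterfly_achievable (R : realType) (q : nat)
    (C1 C2 C3 C4 C5 C67 R1 R2 : R) : Prop :=
  forall eps : R, 0 < eps ->
  exists n : nat, (0 < n)%N /\
  exists m1 m2 k1 k2 k3 k4 k5 k6 : nat,
    (n%:R * (R1 - eps) <= m1%:R /\ n%:R * (R2 - eps) <= m2%:R) /\
    [/\ k1%:R <= n%:R * C1, k2%:R <= n%:R * C2, k3%:R <= n%:R * C3,
        k4%:R <= n%:R * C4 & k5%:R <= n%:R * C5] /\ k6%:R <= n%:R * C67 /\
  exists (f1 : 'I_(q ^ m1) -> 'I_(q ^ k1)) (f4 : 'I_(q ^ m1) -> 'I_(q ^ k4))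
         (f2 : 'I_(q ^ m2) -> 'I_(q ^ k2)) (f5 : 'I_(q ^ m2) -> 'I_(q ^ k5))
         (f3 : 'I_(q ^ k1) -> 'I_(q ^ k2) -> 'I_(q ^ k3))
         (f6 : 'I_(q ^ k3) -> 'I_(q ^ k6))
         (g : 'I_(q ^ k4) -> 'I_(q ^ k5) -> 'I_(q ^ k6) ->
              'I_(q ^ m1) * 'I_(q ^ m2)),
    (#|[set w : 'I_(q ^ m1) * 'I_(q ^ m2) |
         g (f4 w.1) (f5 w.2) (f6 (f3 (f1 w.1) (f2 w.2))) != w]|%:R
      <= eps * (q ^ m1 * q ^ m2)%:R :> R).

From HB Require Import structures.
From mathcomp Require Import all_boot all_order all_algebra.
From mathcomp Require Import reals.
From mathcomp Require Import lra.
Set Implicit Arguments. Unset Strict Implicit. Unset Printing Implicit Defensive.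
Import Order.TTheory GRing.Theory Num.Theory.

(* No coding is needed: split W_i into a routed part of rate R_i - min(R_i, C_(i+3))
   and a direct part of rate min(R_i, C_(i+3)); the direct part goes over the
   edge S_i -> D, the routed parts are concatenated at M1 and forwarded through
   M2.  The hypotheses say exactly that each routed part fits edge i and that
   together they fit min(C3, C6 + C7), so this zero-error code only loses the
   truncation of the rates to whole numbers of q-ary symbols. *)

Section Digits.
Variables (q a b : nat).

Lemma card_digit_pairs : #|{: 'I_(q ^ a) * 'I_(q ^ b)}| = q ^ (a + b).
Proof. by rewrite card_prod !card_ord expnD. Qed.

Definition cat_digits (x : 'I_(q ^ a)) (y : 'I_(q ^ b)) : 'I_(q ^ (a + b)) :=
  cast_ord card_digit_pairs (enum_rank (x, y)).

Definition split_digits (w : 'I_(q ^ (a + b))) : 'I_(q ^ a) * 'I_(q ^ b) :=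
  enum_val (cast_ord (esym card_digit_pairs) w).

Lemma cat_digitsK x y : split_digits (cat_digits x y) = (x, y).
Proof. by rewrite /split_digits cast_ordK enum_rankK. Qed.

Lemma split_digitsK w :
  cat_digits (split_digits w).1 (split_digits w).2 = w.
Proof. by rewrite /cat_digits -surjective_pairing enum_valK cast_ordKV. Qed.

End Digits.

Local Open Scope ring_scope.

Section RoutingCode.
Variables (q p1 d1 p2 d2 : nat).

Definition routing_decode (u : 'I_(q ^ d1)) (v : 'I_(q ^ d2))
    (z : 'I_(q ^ (p1 + p2))) : 'I_(q ^ (p1 + d1)) * 'I_(q ^ (p2 + d2)) :=
  (cat_digits (split_digits z).1 u, cat_digits (split_digits z).2 v).

Lemma routing_decodeK w1 w2 :
  routing_decode (split_digits w1).2 (split_digits w2).2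
    (cat_digits (split_digits w1).1 (split_digits w2).1) = (w1, w2).
Proof. by rewrite /routing_decode cat_digitsK /= !split_digitsK. Qed.

End RoutingCode.

Lemma butterfly_achievable_of_routing (R : realType) (q : nat)
    (C1 C2 C3 C4 C5 C67 R1 R2 : R) :
  (forall eps : R, 0 < eps -> exists n p1 d1 p2 d2 : nat, [/\ (0 < n)%N,
     n%:R * (R1 - eps) <= (p1 + d1)%:R, n%:R * (R2 - eps) <= (p2 + d2)%:R,
     [/\ p1%:R <= n%:R * C1, p2%:R <= n%:R * C2 & d1%:R <= n%:R * C4] &
     [/\ d2%:R <= n%:R * C5, (p1 + p2)%:R <= n%:R * C3
       & (p1 + p2)%:R <= n%:R * C67]]) ->
  butterfly_achievable q C1 C2 C3 C4 C5 C67 R1 R2.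
Proof.
move=> routable eps eps_gt0.
have [n [p1 [d1 [p2 [d2 [n_gt0 rate1 rate2 [k1 k2 k4] [k5 k3 k6]]]]]]] :=
  routable eps eps_gt0.
exists n; split=> //.
exists (p1 + d1)%N, (p2 + d2)%N, p1, p2, (p1 + p2)%N, d1, d2, (p1 + p2)%N.
do 3!split=> //.
exists (fun w => (split_digits w).1), (fun w => (split_digits w).2).
exists (fun w => (split_digits w).1), (fun w => (split_digits w).2).
exists (@cat_digits q p1 p2), id, (@routing_decode q p1 d1 p2 d2).
set errors := finset _; suff -> : errors = set0.
  by rewrite cards0 mulr_ge0 // ltW.
by apply/setP=> -[w1 w2]; rewrite !inE /= routing_decodeK eqxx.
Qed.

Section TruncatedRates.
Variable R : archiRealFieldType.
Implicit Types N x y eps : R.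

Lemma exists_natr_mul_gt2 eps :
  0 < eps -> exists2 n : nat, (0 < n)%N & 2 < n%:R * eps.
Proof.
move=> eps_gt0; exists (Num.truncn (2 / eps)).+1 => //.
by rewrite -ltr_pdivrMr // truncnS_gt.
Qed.

Lemma truncn_mul_le N x y : 0 <= N -> 0 <= x -> x <= y ->
  (Num.truncn (N * x))%:R <= N * y.
Proof.
move=> N_ge0 x_ge0 le_xy.
by rewrite (le_trans _ (ler_wpM2l N_ge0 le_xy)) // truncn_le mulr_ge0.
Qed.

Lemma truncn_split_ge N x y eps : 2 < N * eps ->
  N * (x - eps) <= (Num.truncn (N * (x - y)) + Num.truncn (N * y))%:R.
Proof.
move=> N_eps; have := truncnS_gt (N * (x - y)); have := truncnS_gt (N * y).
by rewrite natrD -!natr1 !mulrBr; lra.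
Qed.

End TruncatedRates.

Theorem theorem5 (R : realType) (q : nat) (hq : (1 < q)%N)
    (C1 C2 C3 C4 C5 C6 C7 R1 R2 : R)
    (hC1 : 0 <= C1) (hC2 : 0 <= C2) (hC3 : 0 <= C3) (hC4 : 0 <= C4)
    (hC5 : 0 <= C5) (hC6 : 0 <= C6) (hC7 : 0 <= C7)
    (hR1 : 0 <= R1) (hR2 : 0 <= R2)
    (h1 : R1 <= C1 + Num.min R1 C4)
    (h2 : R2 <= C2 + Num.min R2 C5)
    (h12 : R1 + R2 <= Num.min C3 (C6 + C7) + Num.min R2 C5 + Num.min R1 C4) :
  butterfly_achievable q C1 C2 C3 C4 C5 (C6 + C7) R1 R2.
Proof.
apply: butterfly_achievable_of_routing => eps eps_gt0.
have [n n_gt0 n_eps] := exists_natr_mul_gt2 eps_gt0.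
set a := Num.min R1 C4 in h1 h12; set b := Num.min R2 C5 in h2 h12.
set c := Num.min C3 (C6 + C7) in h12.
have [a_R1 a_C4] : a <= R1 /\ a <= C4 by rewrite !ge_min !lexx orbT.
have [b_R2 b_C5] : b <= R2 /\ b <= C5 by rewrite !ge_min !lexx orbT.
have [c_C3 c_C67] : c <= C3 /\ c <= C6 + C7 by rewrite !ge_min !lexx orbT.
have a_ge0 : 0 <= a by rewrite le_min hR1 hC4.
have b_ge0 : 0 <= b by rewrite le_min hR2 hC5.
have n_ge0 : 0 <= n%:R :> R by [].
have routed : (Num.truncn (n%:R * (R1 - a)) + Num.truncn (n%:R * (R2 - b)))%:R
    <= n%:R * c.
  apply: (@le_trans _ _ (n%:R * (R1 - a) + n%:R * (R2 - b))).
    by rewrite natrD lerD // truncn_mul_le //; lra.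
  by rewrite -mulrDr ler_wpM2l //; lra.
exists n, (Num.truncn (n%:R * (R1 - a))), (Num.truncn (n%:R * a)),
  (Num.truncn (n%:R * (R2 - b))), (Num.truncn (n%:R * b)).
split; rewrite ?truncn_split_ge //.
- by split; apply: truncn_mul_le => //; lra.
- split; first by apply: truncn_mul_le.
  + exact: le_trans routed (ler_wpM2l n_ge0 c_C3).
  + exact: le_trans routed (ler_wpM2l n_ge0 c_C67).
Qed.
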